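(* Consider the setting described in the context, fix a state $\boldsymbol{x}\in\mathcal{R}_r$ (so region $r$ is the active one), constants $\rho>0$, $\lambda>0$, $\beta_r\ge 0$, and a class $\mathcal{K}$ function $\alpha$. Suppose $m_r^V,m_r^h$ are the Gaussian-process posterior means and $\sigma_r^V,\sigma_r^h$ the posterior standard deviations given by the formulas in the context. Then the optimization problem in the variables $(\boldsymbol{u},d)\in\mathbb{R}^m\times\mathbb{R}$ $$\min_{\boldsymbol{u},d}\ \|\boldsymbol{u}\|_2^2+\rho d^2$$ subject to $$\hat{\dot V}(\boldsymbol{x},\boldsymbol{u})+m_r^V(\boldsymbol{x},\boldsymbol{u})+\beta_r\sigma_r^V(\boldsymbol{x},\boldsymbol{u})+\lambda V(\boldsymbol{x})\le d,$$ $$\hat{\dot h}(\boldsymbol{x},\boldsymbol{u})+m_r^h(\boldsymbol{x},\boldsymbol{u})-\beta_r\sigma_r^h(\boldsymbol{x},\boldsymbol{u})+\alpha(h(\boldsymbol{x}))\ge 0$$ is convex and can be converted into an equivalent standard second-order cone program of the form $$\min_{\boldsymbol{z}}\ \boldsymbol{f}^T\boldsymbol{z}\quad\text{s.t.}\quad \|M^i\boldsymbol{z}+\boldsymbol{n}^i\|_2\le (\boldsymbol{p}^i)^T\boldsymbol{z}+q^i,\quad i=1,\dots,n_c,$$ for a vector variable $\boldsymbol{z}\in\mathbb{R}^{n_z}$ and suitable (state-dependent) $\boldsymbol{f}$, matrices $M^i$, vectors $\boldsymbol{n}^i,\boldsymbol{p}^i$ and scalars $q^i$.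
   Context: Setting: a switching control-affine system $\dot{\boldsymbol{x}}=\sum_{r=1}^R\delta_r(f_r(\boldsymbol{x})+g_r(\boldsymbol{x})\boldsymbol{u})$ with state $\boldsymbol{x}\in\mathcal{X}\subset\mathbb{R}^n$ ($\mathcal{X}$ compact and convex) and input $\boldsymbol{u}\in\mathbb{R}^m$, where $\mathcal{R}_1,\dots,\mathcal{R}_R$ are pairwise disjoint sets covering $\mathcal{X}$ and $\delta_r(\boldsymbol{x})=1$ if $\boldsymbol{x}\in\mathcal{R}_r$ and $0$ otherwise. A nominal model $\dot{\boldsymbol{x}}=\hat f(\boldsymbol{x})+\hat g(\boldsymbol{x})\boldsymbol{u}$ with locally Lipschitz $\hat f,\hat g$ is given. $V:\mathcal{X}\to\mathbb{R}$ (a control Lyapunov function) and $h:\mathbb{R}^n\to\mathbb{R}$ (a control barrier function) are continuously differentiable, and their nominal time derivatives are $\hat{\dot V}(\boldsymbol{x},\boldsymbol{u})=L_{\hat f}V(\boldsymbol{x})+L_{\hat g}V(\boldsymbol{x})\boldsymbol{u}$ and $\hat{\dot h}(\boldsymbol{x},\boldsymbol{u})=L_{\hat f}h(\boldsymbol{x})+L_{\hat g}h(\boldsymbol{x})\boldsymbol{u}$ ($L$ denotes Lie derivative). Write $\boldsymbol{y}=[1,\boldsymbol{u}^T]^T\in\mathbb{R}^{m+1}$. Gaussian-process model: for each region $r$ and each of the two outputs (the CLF residual, superscript $V$, and the CBF residual, superscript $h$) a Gaussian process with zero prior mean and kernel $k_r((\boldsymbol{x},\boldsymbol{y}),(\boldsymbol{x}',\boldsymbol{y}'))=\boldsymbol{y}^T\Lambda_r(\boldsymbol{x},\boldsymbol{x}')\boldsymbol{y}'$,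 $\Lambda_r=\operatorname{diag}(k_r^1,\dots,k_r^{m+1})$ with positive-definite base kernels $k_r^i$ on $\mathcal{R}_r$ (chosen separately for the $V$ and $h$ outputs), is conditioned on data: $N_r$ input pairs $(\boldsymbol{x}_j,\boldsymbol{y}_j)$ with $\boldsymbol{x}_j\in\mathcal{R}_r$, collected as columns of $X_r\in\mathbb{R}^{n\times N_r}$, $Y_r\in\mathbb{R}^{(m+1)\times N_r}$, with output vector $\boldsymbol{\omega}_r\in\mathbb{R}^{N_r}$ ($\boldsymbol{\omega}_r^V$ or $\boldsymbol{\omega}_r^h$) and noise variance $\sigma_n^2>0$. With $K_r$ the Gram matrix of $k_r$ on the data and $\bar K_r=[\bar{\boldsymbol{k}}_r^1,\dots,\bar{\boldsymbol{k}}_r^{N_r}]\circ Y_r\in\mathbb{R}^{(m+1)\times N_r}$, $\bar{\boldsymbol{k}}_r^i=[k_r^1(\boldsymbol{x},\boldsymbol{x}_i),\dots,k_r^{m+1}(\boldsymbol{x},\boldsymbol{x}_i)]^T$ ($\circ$ = Hadamard product), the posterior mean and variance at $(\boldsymbol{x},\boldsymbol{y})$ are $m_r=\boldsymbol{\omega}_r^T(K_r+\sigma_n^2I)^{-1}\bar K_r^T\boldsymbol{y}$ and $\sigma_r^2=\boldsymbol{y}^T\big(\Lambda_r(\boldsymbol{x},\boldsymbol{x})-\bar K_r(K_r+\sigma_n^2I)^{-1}\bar K_r^T\big)\boldsymbol{y}$, with $\sigma_r\ge0$ the standard deviation; applying this with the $V$-data/kernels gives $m_r^V,\sigma_r^V$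 and with the $h$-data/kernels gives $m_r^h,\sigma_r^h$. A class $\mathcal{K}$ function is a continuous strictly increasing $\alpha:[0,a)\to[0,\infty)$ with $\alpha(0)=0$. *)

From mathcomp Require Import all_boot all_order all_algebra.
From mathcomp Require Import all_classical all_reals all_analysis.
Set Implicit Arguments. Unset Strict Implicit. Unset Printing Implicit Defensive.
Import Order.TTheory GRing.Theory Num.Theory numFieldNormedType.Exports.
Local Open Scope classical_set_scope.
Local Open Scope ring_scope.

Section GPCBF.
Variable R : realType.

Definition norm2 (k : nat) (v : 'cV[R]_k) : R := Num.sqrt (\sum_(i < k) v i 0 ^+ 2).

Definition convex_cV (k : nat) (S : set 'cV[R]_k) : Prop :=
  forall a b (t : R), S a -> S b -> 0 <= t <= 1 -> S (t *: a + (1 - t) *: b).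

(** Locally Lipschitz map (norms are the max-norm of mathcomp-analysis,
    equivalent to any other norm in finite dimension). *)
Definition locally_lipschitz (p q k : nat) (f : 'cV[R]_p -> 'M[R]_(q, k)) : Prop :=
  forall x0 : 'cV[R]_p, exists e : R, 0 < e /\ exists L : R,
    forall a b : 'cV[R]_p, `|a - x0| < e -> `|b - x0| < e ->
      `|f a - f b| <= L * `|a - b|.

Definition C1_on (n : nat) (X : set 'cV[R]_n) (V : 'cV[R]_n -> R) : Prop :=
  (forall y, X y -> differentiable V y) /\
  (forall v : 'cV[R]_n, {within X, continuous (fun y => 'd V y v)}).

Definition lie_f (n : nat) (V : 'cV[R]_n -> R) (f : 'cV[R]_n -> 'cV[R]_n)
  (x : 'cV[R]_n) : R := 'd V x (f x).
Definition lie_g (n m : nat) (V : 'cV[R]_n -> R) (g : 'cV[R]_n -> 'M[R]_(n, m))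
  (x : 'cV[R]_n) : 'rV[R]_m := \row_(j < m) 'd V x (col j (g x)).

Definition pd_kernel_on (n : nat) (S : set 'cV[R]_n) (k : 'cV[R]_n -> 'cV[R]_n -> R) : Prop :=
  (forall a b, S a -> S b -> k a b = k b a) /\
  forall (N : nat) (pts : 'I_N -> 'cV[R]_n) (c : 'I_N -> R),
    (forall j, S (pts j)) ->
    0 <= \sum_(j < N) \sum_(l < N) c j * c l * k (pts j) (pts l).

(** Class K function alpha : [0, a) -> [0, oo), with a : \bar R (a = +oo allowed). *)
Definition classK_dom (a : \bar R) : set R := [set s | 0 <= s /\ (s%:E < a)%E].
Definition classK (a : \bar R) (alpha : R -> R) : Prop :=
  (0%:E < a)%E /\
  {within classK_dom a, continuous alpha} /\
  (forall s t, classK_dom a s -> classK_dom a t -> s < t -> alpha s < alpha t) /\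
  alpha 0 = 0 /\ (forall s, classK_dom a s -> 0 <= alpha s).

(** Gaussian-process posterior with kernel y^T Lambda(x,x') y'. *)
Section GP.
Variables (n m N : nat).
Variable kb : 'I_(1 + m) -> 'cV[R]_n -> 'cV[R]_n -> R.
Variable Xd : 'I_N -> 'cV[R]_n.                         (* columns of X_r *)
Variable Yd : 'M[R]_(1 + m, N).
Variable w : 'cV[R]_N.
Variable sn2 : R.

Definition yvec (u : 'cV[R]_m) : 'cV[R]_(1 + m) := col_mx (const_mx 1) u.

Definition Lam (x x' : 'cV[R]_n) : 'M[R]_(1 + m) := diag_mx (\row_i kb i x x').

Definition gram : 'M[R]_N :=
  \matrix_(j < N, l < N) ((col j Yd)^T *m Lam (Xd j) (Xd l) *m col l Yd) 0 0.

Definition Kbar (x : 'cV[R]_n) : 'M[R]_(1 + m, N) :=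
  \matrix_(i < 1 + m, j < N) (kb i x (Xd j) * Yd i j).

Definition gp_mean (x : 'cV[R]_n) (u : 'cV[R]_m) : R :=
  (w^T *m invmx (gram + sn2%:M) *m (Kbar x)^T *m yvec u) 0 0.

Definition gp_var (x : 'cV[R]_n) (u : 'cV[R]_m) : R :=
  ((yvec u)^T *m (Lam x x - Kbar x *m invmx (gram + sn2%:M) *m (Kbar x)^T)
     *m yvec u) 0 0.

Definition gp_sd (x : 'cV[R]_n) (u : 'cV[R]_m) : R := Num.sqrt (gp_var x u).
End GP.

Definition socp_feasible (nz nc : nat) (ki : 'I_nc -> nat)
  (M : forall i : 'I_nc, 'M[R]_(ki i, nz)) (nv : forall i : 'I_nc, 'cV[R]_(ki i))
  (p : 'I_nc -> 'cV[R]_nz) (q : 'I_nc -> R) (z : 'cV[R]_nz) : Prop :=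
  forall i : 'I_nc, norm2 (M i *m z + nv i) <= ((p i)^T *m z) 0 0 + q i.

(** The problem  min obj(u,d) s.t. feas(u,d)  is equivalent to a standard SOCP
    min f^T z s.t. SOC constraints: there is a linear recovery map
    z |-> (Pu z, Pd z) sending SOCP-feasible points to feasible points with no
    larger objective, and every feasible (u,d) is the image of an SOCP-feasible
    z with the same objective value.  (Hence equal optimal values and
    optimal solutions correspond.) *)
Definition socp_equivalent (m : nat) (obj : 'cV[R]_m -> R -> R)
  (feas : 'cV[R]_m -> R -> Prop) : Prop :=
  exists (nz nc : nat) (ki : 'I_nc -> nat)
    (M : forall i : 'I_nc, 'M[R]_(ki i, nz)) (nv : forall i : 'I_nc, 'cV[R]_(ki i))
    (p : 'I_nc -> 'cV[R]_nz) (q : 'I_nc -> R) (f : 'cV[R]_nz)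
    (Pu : 'M[R]_(m, nz)) (Pd : 'rV[R]_nz),
    (forall z, socp_feasible M nv p q z ->
       feas (Pu *m z) ((Pd *m z) 0 0) /\
       obj (Pu *m z) ((Pd *m z) 0 0) <= (f^T *m z) 0 0) /\
    (forall u d, feas u d ->
       exists z, socp_feasible M nv p q z /\ Pu *m z = u /\
                 (Pd *m z) 0 0 = d /\ (f^T *m z) 0 0 = obj u d).

Definition convex_problem (m : nat) (obj : 'cV[R]_m -> R -> R)
  (feas : 'cV[R]_m -> R -> Prop) : Prop :=
  (forall u1 d1 u2 d2 (t : R), 0 <= t <= 1 ->
     obj (t *: u1 + (1 - t) *: u2) (t * d1 + (1 - t) * d2)
       <= t * obj u1 d1 + (1 - t) * obj u2 d2) /\
  (forall u1 d1 u2 d2 (t : R), 0 <= t <= 1 -> feas u1 d1 -> feas u2 d2 ->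
     feas (t *: u1 + (1 - t) *: u2) (t * d1 + (1 - t) * d2)).

End GPCBF.

From mathcomp Require Import all_boot all_order all_algebra.
From mathcomp Require Import all_classical all_reals all_analysis.
From mathcomp Require Import ring lra.
Import Order.TTheory GRing.Theory Num.Theory numFieldNormedType.Exports.
Set Implicit Arguments. Unset Strict Implicit. Unset Printing Implicit Defensive.
Local Open Scope classical_set_scope.
Local Open Scope ring_scope.

(* The posterior mean is affine in y = (1, u), and the posterior covariance
   Lam(x, x) - Kbar C^-1 Kbar^T, with C = K + sn2 I, is positive semidefinite:
   it is the Schur complement of C in the (positive semidefinite) Gram matrix of
   the kernels at x and at the data.  Writing it as L^T L turns the posterior
   standard deviation into the Euclidean norm ||L y||, so both constraints are
   second-order cone constraints in (u, d).  The objective enters through its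
   epigraph ||u||^2 + rho d^2 <= s, i.e. ||(2 u, 2 sqrt(rho) d, s - 1)|| <= s + 1.
   Convexity of the feasible set follows since it is a linear image of an
   intersection of second-order cones, which is convex by the triangle inequality. *)

Section MatrixEntries.
Variable R : pzRingType.
Implicit Types A B : 'M[R]_1.

Lemma mx11D A B : (A + B) 0 0 = A 0 0 + B 0 0. Proof. by rewrite !mxE. Qed.
Lemma mx11B A B : (A - B) 0 0 = A 0 0 - B 0 0. Proof. by rewrite !mxE. Qed.
Lemma mx11Z (t : R) A : (t *: A) 0 0 = t * A 0 0. Proof. by rewrite !mxE. Qed.
End MatrixEntries.

Section BilinearForms.
Variable R : comPzRingType.

Lemma mxform_sum k1 k2 (A : 'M[R]_(k1, k2)) (y : 'cV[R]_k1) (c : 'cV[R]_k2) :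
  (y^T *m A *m c) 0 0 = \sum_i \sum_j y i 0 * c j 0 * A i j.
Proof.
rewrite mxE exchange_big; apply: eq_bigr => j _ /=.
by rewrite mxE mulr_suml; apply: eq_bigr => i _; rewrite !mxE; ring.
Qed.

Lemma mxform_diag k (d : 'rV[R]_k) (a b : 'cV[R]_k) :
  (a^T *m diag_mx d *m b) 0 0 = \sum_i a i 0 * d 0 i * b i 0.
Proof. by rewrite mul_mx_diag mxE; apply: eq_bigr => i _; rewrite !mxE. Qed.
End BilinearForms.

Section RealInequalities.
Variable R : realDomainType.

Lemma cauchy_schwarz k (a b : 'I_k -> R) :
  (\sum_i a i * b i) ^+ 2 <= (\sum_i a i ^+ 2) * (\sum_i b i ^+ 2).
Proof.
have expand : \sum_i \sum_j (a i * b j - a j * b i) ^+ 2 =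
    \sum_i \sum_j (a i ^+ 2 * b j ^+ 2) + \sum_i \sum_j (a j ^+ 2 * b i ^+ 2)
    - 2 * \sum_i \sum_j (a i * b i) * (a j * b j).
  rewrite mulr_sumr -big_split -sumrB; apply: eq_bigr => i _.
  by rewrite mulr_sumr -big_split -sumrB; apply: eq_bigr => j _ /=; ring.
have lagrange : \sum_i \sum_j (a i * b j - a j * b i) ^+ 2 =
    2 * ((\sum_i a i ^+ 2) * (\sum_i b i ^+ 2) - (\sum_i a i * b i) ^+ 2).
  by rewrite expand [X in _ + X - _]exchange_big /= -!big_distrlr /= -expr2; ring.
have : 0 <= \sum_i \sum_j (a i * b j - a j * b i) ^+ 2.
  by do 2![apply: sumr_ge0 => ? _]; apply: sqr_ge0.
by rewrite lagrange pmulr_rge0 // subr_ge0.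
Qed.

Lemma sqr_convex (t a b : R) : 0 <= t <= 1 ->
  (t * a + (1 - t) * b) ^+ 2 <= t * a ^+ 2 + (1 - t) * b ^+ 2.
Proof.
move=> /andP[t_ge0 t_le1].
have gap : t * a ^+ 2 + (1 - t) * b ^+ 2 - (t * a + (1 - t) * b) ^+ 2
    = t * (1 - t) * (a - b) ^+ 2 by ring.
by rewrite -subr_ge0 gap mulr_ge0 ?sqr_ge0 // mulr_ge0 // subr_ge0.
Qed.
End RealInequalities.

Section Norm2.
Variable R : realType.
Implicit Types (k : nat) (t : R).

Lemma norm2_ge0 k (v : 'cV[R]_k) : 0 <= norm2 v.
Proof. exact: sqrtr_ge0. Qed.

Lemma sqr_norm2 k (v : 'cV[R]_k) : norm2 v ^+ 2 = \sum_i v i 0 ^+ 2.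
Proof. by rewrite sqr_sqrtr // sumr_ge0 // => i _; apply: sqr_ge0. Qed.

Lemma norm2_eq0 k (v : 'cV[R]_k) : (norm2 v == 0) = (v == 0).
Proof.
apply/idP/eqP => [|->]; last by rewrite /norm2 big1 ?sqrtr0 // => i _; rewrite mxE expr0n.
rewrite -sqrf_eq0 sqr_norm2 psumr_eq0 => [/allP v0|i _]; last exact: sqr_ge0.
by apply/matrixP => i j; rewrite ord1 mxE; apply/eqP; rewrite -sqrf_eq0 (implyP (v0 i _)).
Qed.

Lemma norm2_le k (v : 'cV[R]_k) (a : R) :
  (norm2 v <= a) = (norm2 v ^+ 2 <= a ^+ 2) && (0 <= a).
Proof.
have [a0|a_lt0] := leP 0 a; first by rewrite andbT ler_sqr ?nnegrE ?norm2_ge0.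
by rewrite andbF; apply/negbTE; rewrite -ltNge (lt_le_trans a_lt0) ?norm2_ge0.
Qed.

Lemma sqr_norm2_col_mx k1 k2 (a : 'cV[R]_k1) (b : 'cV[R]_k2) :
  norm2 (col_mx a b) ^+ 2 = norm2 a ^+ 2 + norm2 b ^+ 2.
Proof.
rewrite !sqr_norm2 big_split_ord /=.
by congr (_ + _); apply: eq_bigr => i _; rewrite (col_mxEu, col_mxEd).
Qed.

Lemma norm2_scalar (a : R) : norm2 (a%:M : 'cV[R]_1) = `|a|.
Proof. by rewrite /norm2 big_ord1 mxE eqxx mulr1n sqrtr_sqr. Qed.

Lemma norm2Z k t (v : 'cV[R]_k) : norm2 (t *: v) = `|t| * norm2 v.
Proof.
rewrite /norm2 -sqrtr_sqr -sqrtrM ?sqr_ge0 // mulr_sumr.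
by congr Num.sqrt; apply: eq_bigr => i _; rewrite mxE exprMn.
Qed.

Lemma norm2D_le k (a b : 'cV[R]_k) : norm2 (a + b) <= norm2 a + norm2 b.
Proof.
have dot_le : \sum_i a i 0 * b i 0 <= norm2 a * norm2 b.
  rewrite -[_ * _]ger0_norm ?mulr_ge0 ?norm2_ge0 // (le_trans (ler_norm _)) //.
  rewrite -ler_sqr ?nnegrE ?mulr_ge0 ?norm2_ge0 //.
  by rewrite !real_normK ?num_real // exprMn !sqr_norm2 cauchy_schwarz.
have expand : norm2 (a + b) ^+ 2 =
    norm2 a ^+ 2 + 2 * (\sum_i a i 0 * b i 0) + norm2 b ^+ 2.
  rewrite !sqr_norm2 mulr_sumr -!big_split; apply: eq_bigr => i _ /=.
  by rewrite mxE; ring.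
by rewrite norm2_le addr_ge0 ?norm2_ge0 // andbT expand sqrrD; lra.
Qed.

Lemma sqr_norm2_convex k t (a b : 'cV[R]_k) : 0 <= t <= 1 ->
  norm2 (t *: a + (1 - t) *: b) ^+ 2 <= t * norm2 a ^+ 2 + (1 - t) * norm2 b ^+ 2.
Proof.
move=> t01; rewrite !sqr_norm2 !mulr_sumr -big_split /=.
by apply: ler_sum => i _; rewrite !mxE sqr_convex.
Qed.
End Norm2.

Section ConsFun.
Variables (T : Type) (k : nat).

Definition consf (s : T) (y : 'I_k -> T) : 'I_k.+1 -> T :=
  fun i => if unlift ord0 i is Some j then y j else s.

Lemma consf0 s y : consf s y ord0 = s.
Proof. by rewrite /consf unlift_none. Qed.

Lemma consf_lift s y j : consf s y (lift ord0 j) = y j.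
Proof. by rewrite /consf liftK. Qed.

Lemma consf_eta (y : 'I_k.+1 -> T) : y = consf (y ord0) (fun j => y (lift ord0 j)).
Proof. by apply: funext => i; rewrite /consf; case: unliftP => [j|] ->. Qed.
End ConsFun.

Lemma forall_ord3 (T : Type) (P : T -> Prop) (x0 a b c : T) :
  (forall i : 'I_3, P (nth x0 [:: a; b; c] i)) <-> [/\ P a, P b & P c].
Proof.
split=> [all3 | [Pa Pb Pc] [[|[|[|i]]] //]].
by split; [exact: (all3 (@Ordinal 3 0 isT)) | exact: (all3 (@Ordinal 3 1 isT))
          | exact: (all3 (@Ordinal 3 2 isT))].
Qed.

Section SumOfSquares.
Variable R : rcfType.

Definition qform k (a : 'I_k -> 'I_k -> R) (y : 'I_k -> R) :=
  \sum_i \sum_j y i * y j * a i j.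

Definition sos k (l : 'I_k -> 'I_k -> R) (y : 'I_k -> R) :=
  \sum_r (\sum_j l r j * y j) ^+ 2.

Lemma qform_consf k (a : 'I_k.+1 -> 'I_k.+1 -> R) s y :
  (forall i j, a i j = a j i) ->
  qform a (consf s y) = s ^+ 2 * a ord0 ord0
    + 2 * s * (\sum_j y j * a ord0 (lift ord0 j))
    + qform (fun i j => a (lift ord0 i) (lift ord0 j)) y.
Proof.
move=> a_sym; rewrite /qform big_ord_recl.
under [X in _ + X]eq_bigr do rewrite big_ord_recl.
rewrite big_ord_recl big_split /= !consf0.
under eq_bigr do rewrite consf_lift -mulrA.
under [X in _ + (X + _) = _]eq_bigr do rewrite consf_lift a_sym [_ * s]mulrC -mulrA.
under [X in _ + (_ + X) = _]eq_bigr do under eq_bigr do rewrite !consf_lift.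
by rewrite -!mulr_sumr; ring.
Qed.

Definition cons_rows k (l0 : 'I_k.+1 -> R) (l : 'I_k -> 'I_k -> R) :
    'I_k.+1 -> 'I_k.+1 -> R :=
  consf l0 (fun r => consf 0 (l r)).

Lemma sos_cons_rows k l0 (l : 'I_k -> 'I_k -> R) s y :
  sos (cons_rows l0 l) (consf s y) = (\sum_j l0 j * consf s y j) ^+ 2 + sos l y.
Proof.
rewrite /sos /cons_rows big_ord_recl consf0; congr (_ + _); apply: eq_bigr => r _.
rewrite consf_lift big_ord_recl consf0 mul0r add0r.
by under eq_bigr do rewrite !consf_lift.
Qed.

Definition schur k (a : 'I_k.+1 -> 'I_k.+1 -> R) : 'I_k -> 'I_k -> R :=
  fun i j => a (lift ord0 i) (lift ord0 j)
             - a ord0 (lift ord0 i) * a ord0 (lift ord0 j) / a ord0 ord0.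

Section Pivot.
Variables (k : nat) (a : 'I_k.+1 -> 'I_k.+1 -> R).
Hypothesis a_sym : forall i j, a i j = a j i.
Hypothesis a_psd : forall y, 0 <= qform a y.

Let a00 := a ord0 ord0.
Let a' i j := a (lift ord0 i) (lift ord0 j).
Let bdot (y : 'I_k -> R) := \sum_j y j * a ord0 (lift ord0 j).

Lemma schur_sym i j : schur a i j = schur a j i.
Proof. by rewrite /schur a_sym [a ord0 (lift ord0 i) * _]mulrC. Qed.

Lemma qform_schur y : qform (schur a) y = qform a' y - bdot y ^+ 2 / a00.
Proof.
rewrite /qform expr2 big_distrlr mulr_suml -sumrB; apply: eq_bigr => i _ /=.
by rewrite mulr_suml -sumrB; apply: eq_bigr => j _; rewrite /schur /a00 /a'; ring.
Qed.

Lemma pivot_ge0 : 0 <= a00.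
Proof.
have := a_psd (consf 1 (fun _ => 0)); rewrite qform_consf //.
rewrite big1 => [|j _]; last by rewrite mul0r.
rewrite /qform big1 => [|i _]; last by rewrite big1 // => j _; rewrite !mul0r.
by rewrite mulr0 !addr0 expr1n mul1r.
Qed.

(* With a zero pivot the form is affine in the first coordinate, so its slope
   [2 * bdot y] must vanish. *)
Lemma pivot0_dot y : a00 = 0 -> bdot y = 0.
Proof.
move=> a00_0; apply/eqP/negPn/negP => Bn0.
have := a_psd (consf (- (qform a' y + 1) / (2 * bdot y)) y).
rewrite qform_consf // /a00 /bdot in a00_0 Bn0 *; rewrite a00_0 mulr0 add0r.
set B := \sum_j _ in Bn0 *.
have -> : 2 * (- (qform a' y + 1) / (2 * B)) * B = - (qform a' y + 1) by field.
lra.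
Qed.

(* Valid even for a vanishing pivot: then [bdot y = 0], and as [Num.sqrt 0 = 0]
   and [x / 0 = 0], the square and the correction term in [schur a] vanish. *)
Lemma qform_consf_pivot s y : qform a (consf s y)
  = (s * Num.sqrt a00 + bdot y / Num.sqrt a00) ^+ 2 + qform (schur a) y.
Proof.
rewrite qform_consf // qform_schur -/(bdot y) -/a00 -/a'.
have [a00_0|a00_n0] := eqVneq a00 0.
  by rewrite a00_0 pivot0_dot // sqrtr0 !invr0 !mulr0; ring.
have sqrt_sqr : Num.sqrt a00 ^+ 2 = a00 by rewrite sqr_sqrtr // pivot_ge0.
have : Num.sqrt a00 != 0 by rewrite sqrtr_eq0 -ltNge lt_neqAle eq_sym a00_n0 pivot_ge0.
by move: sqrt_sqr; set q := Num.sqrt a00 => <- q_n0; field.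
Qed.

Lemma schur_psd y : 0 <= qform (schur a) y.
Proof.
set q := Num.sqrt a00.
have := a_psd (consf (- (bdot y / q) / q) y); rewrite qform_consf_pivot -/q.
suff -> : - (bdot y / q) / q * q + bdot y / q = 0 by rewrite expr0n add0r.
have [->|q_n0] := eqVneq q 0; first by rewrite invr0 !mulr0 addr0.
by rewrite divfK // addNr.
Qed.
End Pivot.

Lemma psd_qform_sos k (a : 'I_k -> 'I_k -> R) :
  (forall i j, a i j = a j i) -> (forall y, 0 <= qform a y) ->
  exists l, forall y, qform a y = sos l y.
Proof.
elim: k a => [|k IH] a a_sym a_psd.
  by exists (fun _ _ => 0) => y; rewrite /qform /sos !big_ord0.
have [l sos_l] := IH _ (schur_sym a_sym) (schur_psd a_sym a_psd).
pose sq := Num.sqrt (a ord0 ord0).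
exists (cons_rows (consf sq (fun j => a ord0 (lift ord0 j) / sq)) l) => y.
rewrite [y]consf_eta qform_consf_pivot // sos_cons_rows -sos_l big_ord_recl !consf0.
congr (_ ^+ 2 + _); rewrite mulrC mulr_suml; congr (_ + _).
by apply: eq_bigr => j _; rewrite !consf_lift; ring.
Qed.
End SumOfSquares.

Section PSDFactor.
Variable R : realType.

Lemma psd_factor k (A : 'M[R]_k) :
  (forall y : 'cV[R]_k, 0 <= (y^T *m A *m y) 0 0) ->
  exists L : 'M[R]_k, forall y, (y^T *m A *m y) 0 0 = norm2 (L *m y) ^+ 2.
Proof.
move=> A_psd; pose a i j := (A i j + A j i) / 2.
have qformE (y : 'cV[R]_k) : (y^T *m A *m y) 0 0 = qform a (fun i => y i 0).
  rewrite mxform_sum /qform /a.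
  transitivity ((\sum_i \sum_j y i 0 * y j 0 * A i j
                 + \sum_j \sum_i y i 0 * y j 0 * A i j) / 2).
    by rewrite [X in _ = (_ + X) / 2]exchange_big /=; field.
  rewrite -big_split mulr_suml; apply: eq_bigr => i _ /=.
  by rewrite -big_split mulr_suml; apply: eq_bigr => j _ /=; ring.
have [l sos_l] : exists l, forall y, qform a y = sos l y.
  apply: psd_qform_sos => [i j|y]; first by rewrite /a addrC.
  have -> : y = (fun i => (\col_j y j) i 0) by apply: funext => i; rewrite mxE.
  by rewrite -qformE.
exists (\matrix_(r, j) l r j) => y; rewrite qformE sos_l sqr_norm2.
by apply: eq_bigr => r _; rewrite mxE; congr (_ ^+ 2); apply: eq_bigr => j _; rewrite mxE.
Qed.
End PSDFactor.

Section GaussianProcess.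
Variable R : realType.

Lemma pd_kernel_cons n (S : set 'cV[R]_n) (k : 'cV[R]_n -> 'cV[R]_n -> R) N
    x0 (p : 'I_N -> 'cV[R]_n) (s : R) (c : 'I_N -> R) :
  pd_kernel_on S k -> S x0 -> (forall j, S (p j)) ->
  0 <= s ^+ 2 * k x0 x0 + 2 * s * (\sum_j c j * k x0 (p j))
       + \sum_j \sum_l c j * c l * k (p j) (p l).
Proof.
move=> [k_sym k_psd] S_x0 S_p.
have S_cons i : S (consf x0 p i) by rewrite /consf; case: unlift.
have : 0 <= qform (fun i j => k (consf x0 p i) (consf x0 p j)) (consf s c).
  exact: k_psd.
rewrite qform_consf ?consf0; last by move=> i j; apply: k_sym.
under eq_bigr do rewrite consf_lift.
by under [qform _ _]eq_bigr do under eq_bigr do rewrite !consf_lift.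
Qed.

Variables (n m N : nat) (kb : 'I_(1 + m) -> 'cV[R]_n -> 'cV[R]_n -> R).
Variables (Xd : 'I_N -> 'cV[R]_n) (Yd : 'M[R]_(1 + m, N)) (sn2 : R).
Variable x : 'cV[R]_n.

Local Notation G := (gram kb Xd Yd).
Local Notation K := (Kbar kb Xd Yd x).
Local Notation C := (gram kb Xd Yd + sn2%:M).

Lemma mulmx_yvec k (B : 'M[R]_(k, 1 + m)) (u : 'cV[R]_m) :
  B *m yvec u = rsubmx B *m u + lsubmx B *m const_mx 1.
Proof. by rewrite -{1}[B]hsubmxK /yvec mul_row_col addrC. Qed.

Lemma gp_mean_affine (w : 'cV[R]_N) :
  exists (p : 'rV[R]_m) (q : R), forall u, gp_mean kb Xd Yd w sn2 x u = (p *m u) 0 0 + q.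
Proof.
set r := w^T *m invmx C *m K^T.
exists (rsubmx r), ((lsubmx r *m (const_mx 1 : 'cV_1)) 0 0) => u.
by rewrite /gp_mean mulmx_yvec mxE.
Qed.

Variable Rr : set 'cV[R]_n.
Hypothesis kb_pd : forall i, pd_kernel_on Rr (kb i).
Hypothesis Rr_x : Rr x.
Hypothesis Rr_Xd : forall j, Rr (Xd j).
Hypothesis sn2_gt0 : 0 < sn2.

Lemma gp_joint_psd (y : 'cV[R]_(1 + m)) (c : 'cV[R]_N) :
  0 <= (y^T *m Lam kb x x *m y) 0 0 + 2 * (y^T *m K *m c) 0 0 + (c^T *m G *m c) 0 0.
Proof.
have -> : (y^T *m Lam kb x x *m y) 0 0 + 2 * (y^T *m K *m c) 0 0 + (c^T *m G *m c) 0 0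
    = \sum_i (y i 0 ^+ 2 * kb i x x
              + 2 * y i 0 * (\sum_j (Yd i j * c j 0) * kb i x (Xd j))
              + \sum_j \sum_l (Yd i j * c j 0) * (Yd i l * c l 0) * kb i (Xd j) (Xd l)).
  rewrite /Lam mxform_diag !mxform_sum !big_split /= mulr_sumr.
  congr (_ + _ + _).
  - by apply: eq_bigr => i _; rewrite mxE; ring.
  - apply: eq_bigr => i _; rewrite !mulr_sumr; apply: eq_bigr => j _; rewrite mxE; ring.
  - rewrite [RHS]exchange_big /=; apply: eq_bigr => j _.
    rewrite [RHS]exchange_big /=; apply: eq_bigr => l _.
    rewrite mxE mxform_diag mulr_sumr; apply: eq_bigr => i _; rewrite !mxE; ring.
by apply: sumr_ge0 => i _; apply: pd_kernel_cons.
Qed.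

Lemma gram_psd (c : 'cV[R]_N) : 0 <= (c^T *m G *m c) 0 0.
Proof. by have := gp_joint_psd 0 c; rewrite trmx0 !mul0mx mxE mulr0 !add0r. Qed.

Lemma gp_cov_form (c : 'cV[R]_N) :
  (c^T *m C *m c) 0 0 = (c^T *m G *m c) 0 0 + sn2 * norm2 c ^+ 2.
Proof.
rewrite mulmxDr mulmxDl [LHS]mxE mul_mx_scalar -scalemxAl; congr (_ + _).
by rewrite !mxE sqr_norm2; congr (_ * _); apply: eq_bigr => j _; rewrite !mxE expr2.
Qed.

Lemma gp_cov_unit : C \in unitmx.
Proof.
rewrite -row_free_unit; apply: inj_row_free => v vC0.
have : sn2 * norm2 v^T ^+ 2 <= 0.
  have cov0 : (v^T^T *m C *m v^T) 0 0 = 0 by rewrite trmxK vC0 mul0mx mxE.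
  by have := gram_psd v^T; move: cov0; rewrite gp_cov_form; lra.
rewrite pmulr_rle0 // => sqr_le0.
have : norm2 v^T == 0 by rewrite -sqrf_eq0 eq_le sqr_le0 sqr_ge0.
by rewrite norm2_eq0 => /eqP/(congr1 trmx); rewrite trmxK trmx0.
Qed.

Lemma gp_post_cov_psd (y : 'cV[R]_(1 + m)) :
  0 <= (y^T *m (Lam kb x x - K *m invmx C *m K^T) *m y) 0 0.
Proof.
(* Evaluate the joint form at its minimiser c = - C^-1 K^T y over c. *)
set v := K^T *m y; set Q := (v^T *m invmx C *m v) 0 0.
set c := - (invmx C *m v).
have vT : v^T = y^T *m K by rewrite trmx_mul trmxK.
have post : (y^T *m (Lam kb x x - K *m invmx C *m K^T) *m y) 0 0
    = (y^T *m Lam kb x x *m y) 0 0 - Q.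
  by rewrite mulmxBr mulmxBl [LHS]mxE; congr (_ + _); rewrite mxE /Q vT !mulmxA.
have cross : (y^T *m K *m c) 0 0 = - Q.
 by rewrite /c mulmxN [LHS]mxE -vT mulmxA.
have quad : (c^T *m C *m c) 0 0 = Q.
  rewrite /c [(- _)^T]linearN /= !mulNmx mulmxN opprK trmx_mul -!mulmxA.
  rewrite (mulmxA C) mulmxV ?gp_cov_unit // mul1mx.
  transitivity ((v^T *m ((invmx C)^T *m v))^T 0 0); first by rewrite [RHS]mxE.
  by rewrite !trmx_mul !trmxK -vT.
have := gp_joint_psd y c; have := gp_cov_form c.
have : 0 <= sn2 * norm2 c ^+ 2 by rewrite mulr_ge0 ?sqr_ge0 // ltW.
by rewrite cross quad; move: post; lra.
Qed.

Lemma gp_sd_affine : exists (A : 'M[R]_(1 + m, m)) (b : 'cV[R]_(1 + m)),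
  forall u, gp_sd kb Xd Yd sn2 x u = norm2 (A *m u + b).
Proof.
have [L sqrL] := psd_factor gp_post_cov_psd.
exists (rsubmx L), (lsubmx L *m const_mx 1) => u.
by rewrite /gp_sd /gp_var sqrL sqrtr_sqr ger0_norm ?norm2_ge0 // mulmx_yvec.
Qed.
End GaussianProcess.

Section SecondOrderCones.
Variable R : realType.

Lemma socp_feasible_convex nz nc ki (M : forall i : 'I_nc, 'M[R]_(ki i, nz)) nv p q
    (z1 z2 : 'cV[R]_nz) (t : R) :
  0 <= t <= 1 -> socp_feasible M nv p q z1 -> socp_feasible M nv p q z2 ->
  socp_feasible M nv p q (t *: z1 + (1 - t) *: z2).
Proof.
move=> /andP[t_ge0 t_le1] feas1 feas2 i.
have t'_ge0 : 0 <= 1 - t by rewrite subr_ge0.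
have -> : M i *m (t *: z1 + (1 - t) *: z2) + nv i
    = t *: (M i *m z1 + nv i) + (1 - t) *: (M i *m z2 + nv i).
  by rewrite mulmxDr -!scalemxAr !scalerDr addrACA -scalerDl [t + _]addrC subrK scale1r.
apply: le_trans (norm2D_le _ _) _; rewrite !norm2Z !ger0_norm //.
have := ler_wpM2l t_ge0 (feas1 i); have := ler_wpM2l t'_ge0 (feas2 i).
by rewrite mulmxDr -!scalemxAr mx11D !mx11Z; lra.
Qed.

Lemma socp_equivalent_feas_convex m (obj : 'cV[R]_m -> R -> R) feas :
  socp_equivalent obj feas ->
  forall u1 d1 u2 d2 (t : R), 0 <= t <= 1 -> feas u1 d1 -> feas u2 d2 ->
    feas (t *: u1 + (1 - t) *: u2) (t * d1 + (1 - t) * d2).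
Proof.
move=> [nz [nc [ki [M [nv [p [q [f [Pu [Pd [to_feas of_feas]]]]]]]]]]].
move=> u1 d1 u2 d2 t t01 /of_feas[z1 [feas1 [Pz1 [Dz1 _]]]].
move=> /of_feas[z2 [feas2 [Pz2 [Dz2 _]]]].
have [feas_z _] := to_feas _ (socp_feasible_convex t01 feas1 feas2).
by move: feas_z; rewrite !mulmxDr -!scalemxAr Pz1 Pz2 mx11D !mx11Z Dz1 Dz2.
Qed.

Lemma soc_epigraph k (v : 'cV[R]_k) (s : R) :
  (norm2 (col_mx (2 *: v) (s - 1)%:M) <= s + 1) = (norm2 v ^+ 2 <= s).
Proof.
rewrite norm2_le sqr_norm2_col_mx norm2Z norm2_scalar !real_normK ?num_real //.
have := sqr_ge0 (norm2 v); rewrite exprMn => nv_ge0.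
rewrite normr_nat; set N := norm2 v ^+ 2 in nv_ge0 *.
by apply/idP/idP => [/andP[]|?]; [nra | apply/andP; split; nra].
Qed.

Record soc (nz : nat) := SOC {
  soc_dim : nat;
  soc_mx : 'M[R]_(soc_dim, nz);
  soc_off : 'cV[R]_soc_dim;
  soc_dir : 'cV[R]_nz;
  soc_cst : R }.

Definition soc_holds nz (c : soc nz) (z : 'cV[R]_nz) :=
  norm2 (soc_mx c *m z + soc_off c) <= ((soc_dir c)^T *m z) 0 0 + soc_cst c.
End SecondOrderCones.

Section TwoConeProblem.
Variable R : realType.
Variables (m k1 k2 : nat).
Variables (A1 : 'M[R]_(k1, m)) (b1 : 'cV[R]_k1) (p1 : 'rV[R]_m) (q1 : R).
Variables (A2 : 'M[R]_(k2, m)) (b2 : 'cV[R]_k2) (p2 : 'rV[R]_m) (q2 : R).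
Variable rho : R.
Hypothesis rho_ge0 : 0 <= rho.

Definition cone_obj (u : 'cV[R]_m) (d : R) := norm2 u ^+ 2 + rho * d ^+ 2.

Definition cone_feas (u : 'cV[R]_m) (d : R) :=
  norm2 (A1 *m u + b1) <= d - ((p1 *m u) 0 0 + q1) /\
  norm2 (A2 *m u + b2) <= (p2 *m u) 0 0 + q2.

Lemma cone_obj_convex u1 d1 u2 d2 (t : R) : 0 <= t <= 1 ->
  cone_obj (t *: u1 + (1 - t) *: u2) (t * d1 + (1 - t) * d2)
    <= t * cone_obj u1 d1 + (1 - t) * cone_obj u2 d2.
Proof.
move=> t01; have := sqr_norm2_convex u1 u2 t01.
have := ler_wpM2l rho_ge0 (sqr_convex d1 d2 t01).
by rewrite /cone_obj; lra.
Qed.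

Lemma cone_obj_norm2 u d : cone_obj u d = norm2 (col_mx u (Num.sqrt rho * d)%:M) ^+ 2.
Proof.
rewrite /cone_obj sqr_norm2_col_mx norm2_scalar real_normK ?num_real //.
by rewrite exprMn (sqr_sqrtr rho_ge0).
Qed.

Local Notation nz := (m + (1 + 1))%N.

Definition proj_u : 'M[R]_(m, nz) := row_mx 1%:M 0.
Definition proj_d : 'rV[R]_nz := row_mx 0 (row_mx 1%:M 0).
Definition proj_s : 'rV[R]_nz := row_mx 0 (row_mx 0 1%:M).

Lemma proj_uE u (a b : 'M[R]_1) : proj_u *m col_mx u (col_mx a b) = u.
Proof. by rewrite mul_row_col mul1mx mul0mx addr0. Qed.

Lemma proj_dE u (a b : 'M[R]_1) : proj_d *m col_mx u (col_mx a b) = a.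
Proof. by rewrite !mul_row_col !mul0mx mul1mx add0r addr0. Qed.

Lemma proj_sE u (a b : 'M[R]_1) : proj_s *m col_mx u (col_mx a b) = b.
Proof. by rewrite !mul_row_col !mul0mx mul1mx !add0r. Qed.

Definition cone1 : soc R nz := SOC (A1 *m proj_u) b1 (proj_d - p1 *m proj_u)^T (- q1).
Definition cone2 : soc R nz := SOC (A2 *m proj_u) b2 (p2 *m proj_u)^T q2.
Definition cone_epi : soc R nz :=
  SOC (col_mx (2 *: col_mx proj_u (Num.sqrt rho *: proj_d)) proj_s)
      (col_mx 0 (- 1%:M)) proj_s^T 1.

Lemma cone12_holds z :
  soc_holds cone1 z /\ soc_holds cone2 z <-> cone_feas (proj_u *m z) ((proj_d *m z) 0 0).
Proof.
rewrite /soc_holds /cone_feas /= !trmxK !mulmxA mulmxBl mx11B.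
by split=> -[]; split; lra.
Qed.

Lemma cone_epi_holds z :
  soc_holds cone_epi z <->
  cone_obj (proj_u *m z) ((proj_d *m z) 0 0) <= (proj_s *m z) 0 0.
Proof.
rewrite /soc_holds /= trmxK mul_col_mx -scalemxAl mul_col_mx -scalemxAl add_col_mx addr0.
rewrite [proj_d *m z]mx11_scalar [proj_s *m z]mx11_scalar.
set d := (proj_d *m z) 0 0; set s := (proj_s *m z) 0 0.
rewrite scale_scalar_mx -(raddfB (@scalar_mx R 1)) !mxE !eqxx !mulr1n.
by rewrite (soc_epigraph (col_mx _ _)) cone_obj_norm2.
Qed.

Theorem cone_socp_equivalent : socp_equivalent cone_obj cone_feas.
Proof.
pose cs (i : 'I_3) := nth cone_epi [:: cone1; cone2; cone_epi] i.
exists nz, 3%N, (fun i => soc_dim (cs i)), (fun i => soc_mx (cs i)),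
  (fun i => soc_off (cs i)), (fun i => soc_dir (cs i)), (fun i => soc_cst (cs i)),
  proj_s^T, proj_u, proj_d; rewrite trmxK.
split=> [z /(forall_ord3 (fun c => soc_holds c z))[c1 c2 c3] | u d feas_ud].
  by split; [apply/cone12_holds | apply/cone_epi_holds].
set z := col_mx u (col_mx d%:M (cone_obj u d)%:M).
have zu : proj_u *m z = u by rewrite proj_uE.
have zd : (proj_d *m z) 0 0 = d by rewrite proj_dE mxE eqxx mulr1n.
have zs : (proj_s *m z) 0 0 = cone_obj u d by rewrite proj_sE mxE eqxx mulr1n.
exists z; rewrite zu zd zs; split=> //.
have [c1 c2] : soc_holds cone1 z /\ soc_holds cone2 z.
  by apply/cone12_holds; rewrite zu zd.
apply/(forall_ord3 (fun c => soc_holds c z)); split=> //.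
by apply/cone_epi_holds; rewrite zu zd zs.
Qed.

Theorem cone_problem_convex : convex_problem cone_obj cone_feas.
Proof.
split; first exact: cone_obj_convex.
exact: socp_equivalent_feas_convex cone_socp_equivalent.
Qed.
End TwoConeProblem.

Theorem theorem1 (R : realType) (n m : nat)
  (X Rr : set 'cV[R]_n) (x : 'cV[R]_n)
  (fhat : 'cV[R]_n -> 'cV[R]_n) (ghat : 'cV[R]_n -> 'M[R]_(n, m))
  (V h : 'cV[R]_n -> R)
  (kbV kbh : 'I_(1 + m) -> 'cV[R]_n -> 'cV[R]_n -> R)
  (N : nat) (Xd : 'I_N -> 'cV[R]_n) (Yd : 'M[R]_(1 + m, N))
  (wV wh : 'cV[R]_N) (sn2 : R)
  (rho lam beta : R) (a : \bar R) (alpha : R -> R) :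
  compact X -> convex_cV X -> Rr `<=` X -> Rr x ->
  locally_lipschitz fhat -> locally_lipschitz ghat ->
  C1_on X V -> C1_on setT h ->
  (forall i, pd_kernel_on Rr (kbV i)) -> (forall i, pd_kernel_on Rr (kbh i)) ->
  (forall j, Rr (Xd j)) -> (forall j, Yd ord0 j = 1) -> 0 < sn2 ->
  0 < rho -> 0 < lam -> 0 <= beta ->
  classK a alpha -> classK_dom a (h x) ->
  let obj := fun (u : 'cV[R]_m) (d : R) => norm2 u ^+ 2 + rho * d ^+ 2 in
  let feas := fun (u : 'cV[R]_m) (d : R) =>
    lie_f V fhat x + (lie_g V ghat x *m u) 0 0
      + gp_mean kbV Xd Yd wV sn2 x u + beta * gp_sd kbV Xd Yd sn2 x u
      + lam * V x <= d
    /\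
    0 <= lie_f h fhat x + (lie_g h ghat x *m u) 0 0
      + gp_mean kbh Xd Yd wh sn2 x u - beta * gp_sd kbh Xd Yd sn2 x u
      + alpha (h x) in
  convex_problem obj feas /\ socp_equivalent obj feas.
Proof.
move=> _ _ _ Rr_x _ _ _ _ kbV_pd kbh_pd Rr_Xd _ sn2_gt0 rho_gt0 _ beta_ge0 _ _ obj feas.
have [pV [qV meanV]] := gp_mean_affine kbV Xd Yd sn2 x wV.
have [ph [qh meanh]] := gp_mean_affine kbh Xd Yd sn2 x wh.
have [AV [bV sdV]] := gp_sd_affine Yd kbV_pd Rr_x Rr_Xd sn2_gt0.
have [Ah [bh sdh]] := gp_sd_affine Yd kbh_pd Rr_x Rr_Xd sn2_gt0.
have -> : feas = cone_feas (beta *: AV) (beta *: bV) (lie_g V ghat x + pV)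
    (lie_f V fhat x + qV + lam * V x) (beta *: Ah) (beta *: bh)
    (lie_g h ghat x + ph) (lie_f h fhat x + qh + alpha (h x)).
  apply/funext => u; apply/funext => d; apply/propext.
  rewrite /feas /cone_feas meanV meanh sdV sdh -!scalemxAl -!scalerDr !norm2Z.
  rewrite ger0_norm // !mulmxDl !mx11D.
  (* Generalising the Lie derivatives stops lra from unfolding them. *)
  move: (lie_f V fhat x) (lie_f h fhat x) (lie_g V ghat x) (lie_g h ghat x).
  move=> LfV Lfh LgV Lgh.
  by split=> -[]; split; lra.
have rho_ge0 := ltW rho_gt0.
by split; [exact: cone_problem_convex | exact: cone_socp_equivalent].
Qed.
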